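(* Let $(g_1,f_1,\lambda_1)$ and $(g_2,f_2,\lambda_2)$ be spectral triples for $(T,p,q)$, $1<p,q<\infty$. Then for every $\varepsilon>0$, \[ P(Tf_1-\varepsilon Tf_2)\le P\Big(Tf_1-\varepsilon^{(p-1)/(q-1)}(\lambda_2/\lambda_1)^{1/(q-1)}\,Tf_2\Big). \]
   Context: $-\infty<a<b<\infty$, $I=[a,b]$, $1<p,q<\infty$, $1/p'=1-1/p$. The functions $u,v$ are positive on $I$ with $u\in L_{p'}(I)$, $v\in L_q(I)$. $T:L_p(I)\to L_q(I)$ is $(Tf)(x)=v(x)\int_a^x f(t)u(t)\,dt$ and $T^*$ is $(T^*h)(x)=u(x)\int_x^b v(y)h(y)\,dy$. For $s>1$ and real $t$, $t_{(s)}:=|t|^{s-1}\operatorname{sgn}(t)$, and $h_{(s)}$ denotes the function $x\mapsto (h(x))_{(s)}$. A spectral triple is $(g,f,\lambda)$ with $f\in L_p(I)$, $\|f\|_p=1$, $\lambda$ a real number, satisfying $g=Tf$ and $f_{(p)}=\lambda\, T^*(g_{(q)})$ on $I$. For a continuous function $h$ on $I$, $P(h)$ is the number of sign changes of $h$ on $(a,b)$. *)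

From HB Require Import structures.
From mathcomp Require Import all_boot all_order all_algebra.
From mathcomp Require Import all_classical all_reals all_analysis.
Set Implicit Arguments. Unset Strict Implicit. Unset Printing Implicit Defensive.
Import Order.TTheory GRing.Theory Num.Theory.
Local Open Scope classical_set_scope.
Local Open Scope ring_scope.

Section Defs.
Variable R : realType.
Let mu := (@lebesgue_measure R).

Definition in_Lp (a b p : R) (f : R -> R) : Prop :=
  measurable_fun `[a, b] f /\
  (\int[mu]_(x in `[a, b]) ((`|f x| `^ p)%:E) < +oo)%E.

Definition pnorm (a b p : R) (f : R -> R) : R :=
  (Rintegral mu `[a, b] (fun x => `|f x| `^ p)) `^ (p^-1).

Definition Top (a : R) (u v f : R -> R) : R -> R :=
  fun x => v x * Rintegral mu `[a, x] (fun t => f t * u t).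

Definition Tstar (b : R) (u v h : R -> R) : R -> R :=
  fun x => u x * Rintegral mu `[x, b] (fun y => v y * h y).

Definition spow (s t : R) : R := (`|t| `^ (s - 1)) * Num.sg t.

Definition spectral_triple (a b p q : R) (u v g f : R -> R) (lam : R) : Prop :=
  [/\ in_Lp a b p f, pnorm a b p f = 1,
      (forall x, a <= x <= b -> g x = Top a u v f x) &
      (forall x, a <= x <= b ->
         spow p (f x) = lam * Tstar b u v (fun y => spow q (g y)) x)].

Definition has_sign_changes (a b : R) (h : R -> R) (n : nat) : Prop :=
  exists x : nat -> R,
    (forall i, (i <= n)%N -> a < x i < b) /\
    (forall i, (i < n)%N -> x i < x i.+1 /\ h (x i) * h (x i.+1) < 0).

Definition P (a b : R) (h : R -> R) : \bar R :=
  ereal_sup [set (n%:R)%:E | n in [set n | has_sign_changes a b h n]].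

End Defs.

From HB Require Import structures.
From mathcomp Require Import all_boot all_order all_algebra.
From mathcomp Require Import all_classical all_reals all_analysis.
From mathcomp Require Import lra ring measurable_realfun.
Set Implicit Arguments. Unset Strict Implicit. Unset Printing Implicit Defensive.
Import Order.TTheory GRing.Theory Num.Theory numFieldNormedType.Exports.
Local Open Scope classical_set_scope.
Local Open Scope ring_scope.

(* Integration does not create sign changes: a primitive vanishing at one end
   of [a, b] changes sign at most as often as its integrand, since between two
   of its sign changes the increment has a fixed sign.  Positive weights and
   the increasing maps t |-> t_(s) preserve signs.  Hence a sign-change pattern
   of T f1 - eps T f2 = T (f1 - eps f2) passes to f1 - eps f2, then to
   (f1)_(p) - eps^(p-1) (f2)_(p) = lam1 T^*((g1)_(q) - del (g2)_(q)) with
   del = eps^(p-1) lam2 / lam1, then to (g1)_(q) - del (g2)_(q), and finally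
   to g1 - del^(1/(q-1)) g2, the right-hand side.  The eigenvalues are positive
   because ||f||_p^p = lam ||T f||_q^q by Fubini. *)

Section SignChanges.
Variable R : realType.
Implicit Types (a b : R) (h : R -> R).

Lemma has_sign_changes0 a b h : a < b -> has_sign_changes a b h 0.
Proof.
by move=> ab; exists (fun=> (a + b) / 2); split => // i _; apply/andP; split; lra.
Qed.

Lemma has_sign_changes_sg a b h1 h2 n :
  (forall x, a < x < b -> Num.sg (h1 x) = Num.sg (h2 x)) ->
  has_sign_changes a b h1 n -> has_sign_changes a b h2 n.
Proof.
move=> sgE [x [xab xalt]]; exists x; split => // i lt_in.
have [lt_x neg] := xalt i lt_in; split => //; move: neg.
by rewrite -!sgr_cp0 !sgrM !sgE // xab // ltnW.
Qed.

Lemma has_sign_changes_eq a b h1 h2 n :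
  (forall x, a < x < b -> h1 x = h2 x) ->
  has_sign_changes a b h1 n -> has_sign_changes a b h2 n.
Proof. by move=> hE; apply: has_sign_changes_sg => x /hE ->. Qed.

Lemma has_sign_changes_pmull a b (k : R -> R) h1 h2 n :
  (forall x, a < x < b -> 0 < k x) ->
  (forall x, a < x < b -> h1 x = k x * h2 x) ->
  has_sign_changes a b h1 n -> has_sign_changes a b h2 n.
Proof.
move=> k_gt0 hE; apply: has_sign_changes_sg => x x_ab.
by rewrite hE // sgrM gtr0_sg ?mul1r ?k_gt0.
Qed.

Lemma P_le a b h1 h2 :
  (forall n, has_sign_changes a b h1 n -> has_sign_changes a b h2 n) ->
  (P a b h1 <= P a b h2)%E.
Proof. by move=> H; apply: ereal_sup_le => _ [n /H hn <-]; exists n. Qed.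

Lemma alternating_neq0 (s : nat -> R) n i :
  (forall j, (j < n.+1)%N -> s j * s j.+1 < 0) -> (i <= n.+1)%N -> s i != 0.
Proof.
move=> s_alt le_in; apply/eqP => s0.
have [lt_in|ge_in] := ltnP i n.+1.
  by have := s_alt i lt_in; rewrite s0 mul0r ltxx.
have ei : i = n.+1 by apply/eqP; rewrite eqn_leq le_in ge_in.
by have := s_alt n (ltnSn n); rewrite -ei s0 mulr0 ltxx.
Qed.

Lemma has_sign_changes_of_alternating a b h (y s : nat -> R) n :
  (forall i, (i <= n)%N -> a < y i < b) ->
  (forall i, (i < n)%N -> y i < y i.+1) ->
  (forall i, (i < n)%N -> s i * s i.+1 < 0) ->
  (forall i, (i <= n)%N -> 0 < h (y i) * s i) ->
  has_sign_changes a b h n.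
Proof.
move=> yab y_incr s_alt hs; exists y; split => // i lt_in; split; first exact: y_incr.
have := hs i (ltnW lt_in); have := hs i.+1 lt_in; have := s_alt i lt_in; nra.
Qed.

End SignChanges.

Section SignedPower.
Variable R : realType.
Implicit Types s t : R.

Lemma spowM_pos s (c t : R) : 0 < c -> spow s (c * t) = c `^ (s - 1) * spow s t.
Proof.
move=> c0; rewrite /spow normrM powRM // ?normr_ge0 // sgrM gtr0_sg // mul1r.
by rewrite gtr0_norm // mulrA.
Qed.

Lemma spow_lt s (x y : R) : 1 < s -> x < y -> spow s x < spow s y.
Proof.
move=> s1 xy; rewrite /spow.
have [x0|x0] := ltP x 0; have [y0|y0] := ltP y 0.
- rewrite !ltr0_sg // !mulrN1 ltrN2 !ltr0_norm //.
  by apply: gt0_ltr_powR; rewrite ?nnegrE; lra.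
- rewrite ltr0_sg // mulrN1.
  apply: (@lt_le_trans _ _ 0); first by rewrite oppr_lt0 powR_gt0 // normr_gt0 lt_eqF.
  by rewrite mulr_ge0 // ?powR_ge0 // sgr_ge0.
- lra.
- have y_gt0 : 0 < y by lra.
  rewrite (gtr0_sg y_gt0) mulr1 !ger0_norm //.
  have [->|x_neq0] := eqVneq x 0; first by rewrite sgr0 mulr0 powR_gt0.
  rewrite gtr0_sg ?mulr1; last by rewrite lt_neqAle eq_sym x_neq0.
  by apply: gt0_ltr_powR; rewrite ?nnegrE; lra.
Qed.

Lemma sg_subr_spow s (x y : R) : 1 < s ->
  Num.sg (x - y) = Num.sg (spow s x - spow s y).
Proof.
move=> s1; have [xy|xy|->] := ltgtP x y; last by rewrite !subrr.
- by rewrite !ltr0_sg // subr_lt0 // spow_lt.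
- by rewrite !gtr0_sg // subr_gt0 // spow_lt.
Qed.

Lemma sg_subr_spowZ s (c x y : R) : 1 < s -> 0 < c ->
  Num.sg (x - c * y) = Num.sg (spow s x - c `^ (s - 1) * spow s y).
Proof. by move=> s1 c0; rewrite -spowM_pos // (@sg_subr_spow s _ _ s1). Qed.

Lemma mul_spow_self s t : 0 < s -> t * spow s t = `|t| `^ s.
Proof.
move=> s0; rewrite /spow mulrCA [t * Num.sg t]mulrC -normrEsg mulrC.
by rewrite mulr_powRB1 // normr_ge0.
Qed.

Lemma norm_spow s t : `|spow s t| <= `|t| `^ (s - 1).
Proof.
rewrite /spow normrM ger0_norm ?powR_ge0 //.
rewrite -[X in _ <= X]mulr1 ler_wpM2l ?powR_ge0 // normr_sg.
by case: (_ != 0).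
Qed.

Lemma spow_measurable s : 1 < s -> measurable_fun setT (spow s).
Proof.
move=> s1; apply: nondecreasing_measurable => // x y.
by rewrite le_eqVlt => /predU1P[->//|xy]; exact/ltW/spow_lt.
Qed.

Lemma powR_rescale (e r t s : R) : 0 <= e -> 0 <= r -> s != 0 ->
  (e `^ (t / s) * r `^ s^-1) `^ s = e `^ t * r.
Proof.
by move=> e0 r0 s0; rewrite powRM ?powR_ge0 // -!powRrM divfK // mulVf // powRr1.
Qed.

End SignedPower.

Section Integrals.
Variable R : realType.
Local Notation mu := (@lebesgue_measure R).

Lemma Rintegral_itv1 (c : R) (f : R -> R) : Rintegral mu `[c, c] f = 0.
Proof. by rewrite set_itv1 Rintegral_set1. Qed.

Lemma Rintegral_itvBl (c d b : R) (f : R -> R) : c <= d -> d <= b ->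
  mu.-integrable `[c, b] (EFin \o f) ->
  Rintegral mu `[c, b] f - Rintegral mu `[d, b] f = Rintegral mu `[c, d[ f.
Proof.
move=> cd db itf.
rewrite (@itv_bndbnd_setU _ _ _ (BLeft d)) ?bnd_simp //.
rewrite Rintegral_setU //=; first by rewrite addrK.
- by rewrite -itv_bndbnd_setU // bnd_simp.
- apply/disj_setPS => y [/=]; rewrite 2!in_itv/= => /andP[_ yd] /andP[].
  by rewrite leNgt yd.
Qed.

Lemma integrableBZ (i : interval R) (f1 f2 : R -> R) (c : R) :
  mu.-integrable [set` i] (EFin \o f1) -> mu.-integrable [set` i] (EFin \o f2) ->
  mu.-integrable [set` i] (EFin \o (fun x => f1 x - c * f2 x)).
Proof.
move=> i1 i2.
apply: (@eq_integrable _ _ _ mu _ _ (fun x => (f1 x)%:E - c%:E * (f2 x)%:E)%E) => //.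
by apply: integrableB => //; exact: integrableZl.
Qed.

Lemma RintegralBZ (i : interval R) (f1 f2 : R -> R) (c : R) :
  mu.-integrable [set` i] (EFin \o f1) -> mu.-integrable [set` i] (EFin \o f2) ->
  Rintegral mu [set` i] (fun x => f1 x - c * f2 x) =
  Rintegral mu [set` i] f1 - c * Rintegral mu [set` i] f2.
Proof.
move=> i1 i2; rewrite RintegralB // ?RintegralZl //.
apply: (@eq_integrable _ _ _ mu _ _ (fun x => c%:E * (f2 x)%:E)%E) => //.
exact: integrableZl.
Qed.

Lemma exists_mul_Rintegral_gt0 (D : set R) (phi : R -> R) : measurable D ->
  mu.-integrable D (EFin \o phi) -> Rintegral mu D phi != 0 ->
  exists2 y, D y & 0 < phi y * Rintegral mu D phi.
Proof.
move=> mD iphi I_neq0.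
have [//|noy] := pselect (exists2 y, D y & 0 < phi y * Rintegral mu D phi).
have : 0 <= Rintegral mu D phi * - Rintegral mu D phi.
  rewrite -RintegralZr //; apply: Rintegral_ge0 => y Dy.
  by rewrite mulrN oppr_ge0 leNgt; apply/negP => ?; apply: noy; exists y.
by rewrite mulrN oppr_ge0 -expr2 leNgt exprn_even_gt0 // I_neq0.
Qed.

Lemma exists_mul_increment_gt0 (D : set R) (phi : R -> R) (c d : R) :
  measurable D -> mu.-integrable D (EFin \o phi) ->
  d - c = Rintegral mu D phi -> d != 0 -> c * d <= 0 ->
  exists2 y, D y & 0 < phi y * d.
Proof.
move=> mD iphi incrE d_neq0 cd_le0.
have I_d_gt0 : 0 < Rintegral mu D phi * d.
  have : 0 < d ^+ 2 by rewrite exprn_even_gt0.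
  by rewrite -incrE mulrBl expr2; lra.
have [|y Dy] := exists_mul_Rintegral_gt0 mD iphi.
  by apply: contraTneq I_d_gt0 => ->; rewrite mul0r ltxx.
by exists y => //; nra.
Qed.

Lemma norm_Rintegral_le (a b x : R) (phi : R -> R) : a <= x <= b ->
  mu.-integrable `[a, b] (EFin \o phi) ->
  `|Rintegral mu `[a, x] phi| <= Rintegral mu `[a, b] (fun t => `|phi t|).
Proof.
move=> /andP[ax xb] iphi.
have iax : mu.-integrable `[a, x] (EFin \o phi).
  by apply: integrableS iphi => //; apply: subset_itv; rewrite bnd_simp.
apply: (le_trans (@le_normr_Rintegral _ _ _ mu _ _ (measurable_itv _) iax)).
have iabs : mu.-integrable `[a, b] (EFin \o (fun t => `|phi t|)).
  by have := integrable_abse iphi; apply: eq_integrable.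
have := @Rintegral_itvB R (fun t => `|phi t|) (BLeft a) (BRight b) x iabs.
rewrite !bnd_simp => /(_ ax xb) splitE.
suff : 0 <= Rintegral mu `]x, b] (fun t => `|phi t|) by lra.
by apply: Rintegral_ge0 => t _.
Qed.

End Integrals.

Section LpIntegrability.
Variable R : realType.
Local Notation mu := (@lebesgue_measure R).

Lemma measurable_fun_powR_norm (D : set R) (p : R) (f : R -> R) :
  measurable_fun D f -> measurable_fun D (fun x => `|f x| `^ p).
Proof.
move=> mf; apply: measurableT_comp (measurable_powR p) _.
exact: measurableT_comp (@normr_measurable R setT) mf.
Qed.

Lemma in_Lp_integrable (a b p : R) (f : R -> R) : in_Lp a b p f ->
  mu.-integrable `[a, b] (fun x => (`|f x| `^ p)%:E).
Proof.
move=> [mf fin]; apply/integrableP; split.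
  by apply/measurable_EFinP; apply: measurable_fun_powR_norm.
rewrite (le_lt_trans _ fin) //.
by under eq_integral do rewrite gee0_abs ?lee_fin ?powR_ge0 //.
Qed.

(* Young's inequality |f u| <= |f|^p / p + |u|^p' / p' bounds the product. *)
Lemma in_Lp_conj_mul_integrable (a b p : R) (f u : R -> R) : 1 < p ->
  in_Lp a b p f -> in_Lp a b ((1 - p^-1)^-1) u ->
  mu.-integrable `[a, b] (EFin \o (fun x => f x * u x)).
Proof.
move=> p1 hf hu; set p' := (1 - p^-1)^-1.
have p_gt0 : 0 < p by lra.
have p'_gt0 : 0 < p' by rewrite /p' invr_gt0 subr_gt0 invf_lt1.
have conj_p : p^-1 + p'^-1 = 1 by rewrite /p' invrK; ring.
apply: (@le_integrable _ _ _ mu _ (measurable_itv _) _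
  ((fun x => (p^-1)%:E * (`|f x| `^ p)%:E) \+
   (fun x => (p'^-1)%:E * (`|u x| `^ p')%:E))%E).
- by apply/measurable_EFinP; apply: measurable_funM; [exact: hf.1|exact: hu.1].
- move=> x _; rewrite /= lee_fin [X in _ <= X]ger0_norm; last first.
    by rewrite addr_ge0 // mulr_ge0 ?powR_ge0 // invr_ge0 ltW.
  rewrite normrM (le_trans (conjugate_powR _ _ p_gt0 p'_gt0 conj_p)) ?normr_ge0 //.
  by rewrite !(mulrC (_^-1)).
- by apply: integrableD => //; apply: integrableZl => //; exact: in_Lp_integrable.
Qed.

Lemma mul_spow_primitive_integrable (a b q : R) (v g phi : R -> R) :
  a < b -> 1 < q -> in_Lp a b q v -> mu.-integrable `[a, b] (EFin \o phi) ->
  (forall x, a <= x <= b -> g x = v x * Rintegral mu `[a, x] phi) ->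
  mu.-integrable `[a, b] (EFin \o (fun y => v y * spow q (g y))).
Proof.
move=> ab q1 hv iphi gE.
have mg : measurable_fun `[a, b] g.
  apply: (eq_measurable_fun (fun x => v x * Rintegral mu `[a, x] phi)).
    by move=> x; rewrite inE /= in_itv /= => /gE ->.
  apply: measurable_funM hv.1 _; apply: subspace_continuous_measurable_fun => //.
  exact: parameterized_integral_continuous (ltW ab) iphi.
set M := Rintegral mu `[a, b] (fun t => `|phi t|).
have M_ge0 : 0 <= M by apply: Rintegral_ge0 => t _.
apply: (@le_integrable _ _ _ mu _ (measurable_itv _) _
  (fun y => (M `^ (q - 1))%:E * (`|v y| `^ q)%:E)%E).
- apply/measurable_EFinP; apply: measurable_funM; first exact: hv.1.
  exact: measurableT_comp (spow_measurable q1) mg.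
- move=> x; rewrite /= in_itv /= => x_ab; rewrite lee_fin.
  rewrite [X in _ <= X]ger0_norm; last by apply: mulr_ge0; apply: powR_ge0.
  rewrite normrM (le_trans (ler_wpM2l (normr_ge0 _) (norm_spow _ _))) //.
  rewrite gE // normrM powRM ?normr_ge0 // mulrA mulr_powRB1 ?normr_ge0 //; last lra.
  rewrite mulrC ler_wpM2r ?powR_ge0 //.
  apply: ge0_ler_powR; rewrite ?nnegrE ?normr_ge0 //; first lra.
  exact: norm_Rintegral_le.
- by apply: integrableZl => //; exact: in_Lp_integrable.
Qed.

End LpIntegrability.

Section VariationDiminishing.
Variable R : realType.
Local Notation mu := (@lebesgue_measure R).
Variables (a b : R) (phi : R -> R).
Hypotheses (ab : a < b) (iphi : mu.-integrable `[a, b] (EFin \o phi)).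

Let integrable_sub (i : interval R) :
  [set` i] `<=` `[a, b] -> mu.-integrable [set` i] (EFin \o phi).
Proof. by move=> sub; apply: integrableS iphi. Qed.

(* Between consecutive sign changes of the primitive, the increment of the
   primitive has the sign of its new value, so phi takes that sign there. *)
Lemma primitive_sign_changes n :
  has_sign_changes a b (fun x => Rintegral mu `[a, x] phi) n ->
  has_sign_changes a b phi n.
Proof.
case: n => [_|m [x [xab xalt]]]; first exact: has_sign_changes0.
pose F x := Rintegral mu `[a, x] phi.
have Falt j : (j < m.+1)%N -> F (x j) * F (x j.+1) < 0 by move/xalt => [].
pose xl i := if i is j.+1 then x j else a.
have xl_lt i : (i <= m.+1)%N -> a <= xl i < x i.
  case: i => [|i] /= le_im; first by have /andP[ax _] := xab 0%N isT; rewrite lexx.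
  have [lt_x _] := xalt i le_im; have /andP[axi _] := xab i (ltnW le_im).
  by apply/andP; split; lra.
have witness i : exists y, (i <= m.+1)%N -> xl i < y <= x i /\ 0 < phi y * F (x i).
  have [le_im|] := leqP i m.+1; last by exists a.
  have /andP[xl_ge xl_lt_x] := xl_lt i le_im; have /andP[_ xb] := xab i le_im.
  have [y] : exists2 y, `]xl i, x i]%classic y & 0 < phi y * F (x i).
    apply: (@exists_mul_increment_gt0 _ _ _ (F (xl i))).
    - exact: measurable_itv.
    - by apply: integrable_sub; apply: subset_itv; rewrite bnd_simp; lra.
    - rewrite Rintegral_itvB // ?bnd_simp //; last lra.
      by apply: integrable_sub; apply: subset_itv; rewrite bnd_simp; lra.
    - exact: alternating_neq0 Falt le_im.
    - case: i {xl_ge xl_lt_x xb} le_im => [|i] le_im /=.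
        by rewrite /F Rintegral_itv1 mul0r.
      by have /ltW := Falt i le_im.
  by rewrite /= in_itv /= => y_x y_pos; exists y.
have [y yP] := choice witness.
apply: (has_sign_changes_of_alternating (y := y) (s := fun i => F (x i))) => //.
- move=> i le_im; have [/andP[xl_y y_x] _] := yP i le_im.
  have /andP[ax _] := xl_lt i le_im; have /andP[_ xb] := xab i le_im.
  by apply/andP; split; lra.
- move=> i lt_im; have [/andP[_ y_x] _] := yP i (ltnW lt_im).
  by have [/andP[/= x_y _] _] := yP i.+1 lt_im; lra.
- by move=> i /yP [].
Qed.

Lemma coprimitive_sign_changes n :
  has_sign_changes a b (fun x => Rintegral mu `[x, b] phi) n ->
  has_sign_changes a b phi n.
Proof.
case: n => [_|m [x [xab xalt]]]; first exact: has_sign_changes0.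
pose K x := Rintegral mu `[x, b] phi.
have Kalt j : (j < m.+1)%N -> K (x j) * K (x j.+1) < 0 by move/xalt => [].
pose xr i := if (i < m.+1)%N then x i.+1 else b.
have xr_gt i : (i <= m.+1)%N -> x i < xr i <= b.
  rewrite /xr; case: ltnP => [lt_im _|_ le_im].
    have [lt_x _] := xalt i lt_im; have /andP[_ xb] := xab i.+1 lt_im.
    by apply/andP; split; lra.
  by have /andP[_ xb] := xab i le_im; rewrite lexx andbT.
have witness i : exists y, (i <= m.+1)%N -> x i <= y < xr i /\ 0 < phi y * K (x i).
  have [le_im|] := leqP i m.+1; last by exists a.
  have /andP[x_lt_xr xr_le] := xr_gt i le_im; have /andP[ax _] := xab i le_im.
  have [y] : exists2 y, `[x i, xr i[%classic y & 0 < phi y * K (x i).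
    apply: (@exists_mul_increment_gt0 _ _ _ (K (xr i))).
    - exact: measurable_itv.
    - by apply: integrable_sub; apply: subset_itv; rewrite bnd_simp; lra.
    - rewrite Rintegral_itvBl //; try lra.
      by apply: integrable_sub; apply: subset_itv; rewrite bnd_simp; lra.
    - exact: alternating_neq0 Kalt le_im.
    - rewrite /xr; case: ltnP => [lt_im|_]; last by rewrite /K Rintegral_itv1 mul0r.
      by have /ltW := Kalt i lt_im; rewrite mulrC.
  by rewrite /= in_itv /= => y_x y_pos; exists y.
have [y yP] := choice witness.
apply: (has_sign_changes_of_alternating (y := y) (s := fun i => K (x i))) => //.
- move=> i le_im; have [/andP[x_y y_xr] _] := yP i le_im.
  have /andP[_ xr_b] := xr_gt i le_im; have /andP[ax _] := xab i le_im.
  by apply/andP; split; lra.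
- move=> i lt_im; have [/andP[_ y_xr] _] := yP i (ltnW lt_im).
  have [/andP[x_y _] _] := yP i.+1 lt_im; move: y_xr; rewrite /xr lt_im; lra.
- by move=> i /yP [].
Qed.

End VariationDiminishing.

Section TriangleFubini.
Variable R : realType.
Local Notation mu := (@lebesgue_measure R).
Variables (a b : R) (phi psi : R -> R).
Hypotheses (iphi : mu.-integrable `[a, b] (EFin \o phi))
           (ipsi : mu.-integrable `[a, b] (EFin \o psi)).

Let phr : R -> R := phi \_ `[a, b].
Let psr : R -> R := psi \_ `[a, b].
Let below : set (R * R) := [set z | z.1 <= z.2].

Let measurable_below : measurable below.
Proof.
have -> : below = setT `&` ((fun z : R * R => z.2 - z.1) @^-1` `[0, +oo[).
  by apply/seteqP; split => z /=; rewrite in_itv /= andbT subr_ge0 //; case.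
apply: measurable_funB measurableT _ (measurable_itv _).
- exact: measurable_snd.
- exact: measurable_fst.
Qed.

Let measurable_restrict (f : R -> R) :
  mu.-integrable `[a, b] (EFin \o f) -> measurable_fun setT (f \_ `[a, b]).
Proof.
move=> itf; apply: (measurable_restrictT f (measurable_itv `[a, b])).1.
by have /measurable_EFinP := measurable_int mu itf.
Qed.

Let integrable_restrict (f : R -> R) (c d : R) :
  mu.-integrable `[a, b] (EFin \o f) -> a <= c -> d <= b ->
  mu.-integrable setT (EFin \o (f \_ `[c, d])).
Proof.
move=> itf ac db; rewrite -restrict_EFin.
apply: (@integrable_mkcond _ _ _ mu `[c, d] (EFin \o f) (measurable_itv _)).1.
by apply: integrableS itf => //; apply: subset_itv; rewrite bnd_simp.
Qed.

Let integral_restrict (f : R -> R) (c d : R) :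
  mu.-integrable setT (EFin \o (f \_ `[c, d])) ->
  (\int[mu]_y ((f \_ `[c, d]) y)%:E)%E = (Rintegral mu `[c, d] f)%:E.
Proof.
by move=> itf; rewrite Rintegral_mkcond fineK // (integrable_fin_num measurableT itf).
Qed.

Let F (z : R * R) : R := phr z.1 * psr z.2 * \1_below z.

Let measurable_F : measurable_fun setT F.
Proof.
apply: measurable_funM; last exact: measurable_indic.
apply: measurable_funM.
- exact: measurableT_comp (measurable_restrict iphi) measurable_fst.
- exact: measurableT_comp (measurable_restrict ipsi) measurable_snd.
Qed.

Let F_section1 x :
  (\int[mu]_y (F (x, y))%:E)%E = (phr x * Rintegral mu `[x, b] psi)%:E.
Proof.
have [xab|xab] := boolP (x \in `[a, b]%classic); last first.
  have phr0 : phr x = 0 by rewrite /phr patchE (negbTE xab).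
  rewrite phr0 mul0r; under eq_integral do rewrite /F /= phr0 !mul0r.
  by rewrite integral0.
move: (xab); rewrite in_setE /= in_itv /= => /andP[ax xb].
transitivity (\int[mu]_y ((phr x)%:E * ((psi \_ `[x, b]) y)%:E))%E.
  apply: eq_integral => y _; rewrite /F /= -EFinM -mulrA; congr (_ * _)%:E.
  rewrite /psr !patchE indicE.
  have [yx|xy] := ltP y x.
    rewrite (memNset (A := below)) /=; last by rewrite /below /=; lra.
    by rewrite mulr0 memNset //= in_itv /=; lra.
  rewrite (mem_set (A := below)) //= mulr1.
  have [yb|yb] := leP y b; first by rewrite !mem_set //= in_itv /=; apply/andP; split; lra.
  by rewrite !memNset //= in_itv /=; lra.
rewrite integralZl //; last exact: integrable_restrict.
by rewrite integral_restrict ?EFinM //; exact: integrable_restrict.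
Qed.

Let F_section2 y :
  (\int[mu]_x (F (x, y))%:E)%E = (psr y * Rintegral mu `[a, y] phi)%:E.
Proof.
have [yab|yab] := boolP (y \in `[a, b]%classic); last first.
  have psr0 : psr y = 0 by rewrite /psr patchE (negbTE yab).
  rewrite psr0 mul0r; under eq_integral do rewrite /F /= psr0 mulr0 mul0r.
  by rewrite integral0.
move: (yab); rewrite in_setE /= in_itv /= => /andP[ay yb].
transitivity (\int[mu]_x ((psr y)%:E * ((phi \_ `[a, y]) x)%:E))%E.
  apply: eq_integral => x _; rewrite /F /= -EFinM mulrAC [in RHS]mulrC.
  congr (_ * _)%:E; rewrite /phr !patchE indicE.
  have [yx|xy] := ltP y x.
    rewrite (memNset (A := below)) /=; last by rewrite /below /=; lra.
    by rewrite mulr0 memNset //= in_itv /=; lra.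
  rewrite (mem_set (A := below)) //= mulr1.
  have [ax|ax] := leP a x; first by rewrite !mem_set //= in_itv /=; apply/andP; split; lra.
  by rewrite !memNset //= in_itv /=; lra.
rewrite integralZl //; last exact: integrable_restrict.
by rewrite integral_restrict ?EFinM //; exact: integrable_restrict.
Qed.

Let integral_norm (f : R -> R) : mu.-integrable setT (EFin \o f) ->
  (\int[mu]_y (`|f y|)%:E)%E = (Rintegral mu setT (fun y => `|f y|))%:E.
Proof.
by move=> itf; rewrite fineK // (integrable_fin_num measurableT (integrable_abse itf)).
Qed.

Let integrable_F : (mu \x mu)%E.-integrable setT (EFin \o F).
Proof.
have mEF : measurable_fun setT (EFin \o F) by apply/measurable_EFinP.
apply: (integrable12ltyP mu mu mEF).2.
have ipsr : mu.-integrable setT (EFin \o psr) by exact: integrable_restrict.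
have iphr : mu.-integrable setT (EFin \o phr) by exact: integrable_restrict.
have mphr := measurable_restrict iphi; have mpsr := measurable_restrict ipsi.
set cy := Rintegral mu setT (fun y => `|psr y|).
apply: (@le_lt_trans _ _ (\int[mu]_x ((`|phr x| * cy)%:E))%E).
  apply: ge0_le_integral => //.
  - by move=> x _; apply: integral_ge0.
  - have mF : measurable_fun setT (fun z => `|(F z)%:E|)%E by exact: measurableT_comp.
    exact: (@measurable_fun_fubini_tonelli_F _ _ _ _ _ mu _ mF (fun z => abse_ge0 _)).
  - apply/measurable_EFinP; apply: measurable_funM => //.
    exact: measurableT_comp (@normr_measurable R setT) mphr.
  move=> x _.
  have mFx : measurable_fun setT (fun y => F (x, y)).
    exact: measurableT_comp measurable_F (pair1_measurable x).
  have mpsa : measurable_fun setT (fun y => `|psr y|).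
    exact: measurableT_comp (@normr_measurable R setT) mpsr.
  apply: (@le_trans _ _ (\int[mu]_y ((`|phr x|)%:E * (`|psr y|)%:E))%E).
    apply: ge0_le_integral => //.
    - by apply: measurableT_comp => //; apply/measurable_EFinP.
    - by rewrite -/(EFin \o _); apply/measurable_EFinP; apply: measurable_funM.
    - move=> y _; rewrite /F /= -EFinM lee_fin !normrM -[X in _ <= X]mulr1.
      apply: ler_wpM2l; rewrite ?mulr_ge0 // indicE.
      by case: (_ \in _); rewrite ?normr1 ?normr0.
  rewrite ge0_integralZl_EFin //; last by apply/measurable_EFinP.
  by rewrite integral_norm // EFinM.
under eq_integral do rewrite EFinM.
rewrite ge0_integralZr //; last 2 first.
- by apply: measurableT_comp => //; exact: measurableT_comp.
- by rewrite lee_fin Rintegral_ge0.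
by rewrite integral_norm // -EFinM ltry.
Qed.

Lemma Rintegral_triangle_swap :
  Rintegral mu `[a, b] (fun x => phi x * Rintegral mu `[x, b] psi) =
  Rintegral mu `[a, b] (fun y => psi y * Rintegral mu `[a, y] phi).
Proof.
have := Fubini integrable_F; rewrite /comp.
under eq_integral do rewrite F_section1.
under [X in _ = X -> _]eq_integral do rewrite F_section2.
have restrictE (f h : R -> R) :
    (\int[mu]_x (((f \_ `[a, b]) x * h x)%:E))%E =
    (\int[mu]_(x in `[a, b]) ((f x * h x)%:E))%E.
  rewrite [RHS]integral_mkcond; apply: eq_integral => x _; rewrite !patchE.
  by case: ifPn => //; rewrite mul0r.
by rewrite /phr /psr !restrictE /Rintegral => ->.
Qed.

End TriangleFubini.

Section SignTransfer.
Variable R : realType.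
Local Notation mu := (@lebesgue_measure R).
Variables (a b c : R) (u v : R -> R).
Hypotheses (ab : a < b) (u_gt0 : forall x, a < x < b -> 0 < u x)
  (v_gt0 : forall x, a < x < b -> 0 < v x).

Let integrable_sub (f : R -> R) (x y : R) : a <= x -> y <= b ->
  mu.-integrable `[a, b] (EFin \o f) -> mu.-integrable `[x, y] (EFin \o f).
Proof.
by move=> ax yb itf; apply: integrableS itf => //; apply: subset_itv; rewrite bnd_simp.
Qed.

Lemma Top_sign_changes (f1 f2 : R -> R) n :
  mu.-integrable `[a, b] (EFin \o (fun t => f1 t * u t)) ->
  mu.-integrable `[a, b] (EFin \o (fun t => f2 t * u t)) ->
  has_sign_changes a b (fun x => Top a u v f1 x - c * Top a u v f2 x) n ->
  has_sign_changes a b (fun t => f1 t - c * f2 t) n.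
Proof.
move=> i1 i2 /(has_sign_changes_pmull v_gt0
  (h2 := fun x => Rintegral mu `[a, x] (fun t => f1 t * u t - c * (f2 t * u t)))).
move=> H; apply: (has_sign_changes_pmull u_gt0
  (h1 := fun t => f1 t * u t - c * (f2 t * u t))) => [x _|]; first by ring.
apply: (primitive_sign_changes ab (integrableBZ c i1 i2)); apply: H => x /andP[ax xb].
by rewrite RintegralBZ /Top; [ring|apply: integrable_sub i1|apply: integrable_sub i2]; lra.
Qed.

Lemma Tstar_sign_changes (h1 h2 : R -> R) n :
  mu.-integrable `[a, b] (EFin \o (fun y => v y * h1 y)) ->
  mu.-integrable `[a, b] (EFin \o (fun y => v y * h2 y)) ->
  has_sign_changes a b (fun x => Tstar b u v h1 x - c * Tstar b u v h2 x) n ->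
  has_sign_changes a b (fun t => h1 t - c * h2 t) n.
Proof.
move=> i1 i2 /(has_sign_changes_pmull u_gt0
  (h2 := fun x => Rintegral mu `[x, b] (fun y => v y * h1 y - c * (v y * h2 y)))).
move=> H; apply: (has_sign_changes_pmull v_gt0
  (h1 := fun y => v y * h1 y - c * (v y * h2 y))) => [x _|]; first by ring.
apply: (coprimitive_sign_changes ab (integrableBZ c i1 i2)); apply: H => x /andP[ax xb].
by rewrite RintegralBZ /Tstar; [ring|apply: integrable_sub i1|apply: integrable_sub i2]; lra.
Qed.

End SignTransfer.

Section SpectralTriple.
Variable R : realType.
Local Notation mu := (@lebesgue_measure R).
Variables (a b p q : R) (u v : R -> R).
Hypotheses (ab : a < b) (p_gt1 : 1 < p) (q_gt1 : 1 < q)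
  (hu : in_Lp a b ((1 - p^-1)^-1) u) (hv : in_Lp a b q v).

Lemma spectral_triple_integrable g f lam :
  spectral_triple a b p q u v g f lam ->
  mu.-integrable `[a, b] (EFin \o (fun t => f t * u t)) /\
  mu.-integrable `[a, b] (EFin \o (fun y => v y * spow q (g y))).
Proof.
case=> fLp _ gE _; have iphi := in_Lp_conj_mul_integrable p_gt1 fLp hu.
by split => //; exact: mul_spow_primitive_integrable ab q_gt1 hv iphi gE.
Qed.

(* Integrating f * f_(p) = lam f T^*(g_(q)) and swapping the order of
   integration gives ||f||_p^p = lam ||Tf||_q^q, and ||f||_p = 1. *)
Lemma spectral_triple_gt0 g f lam :
  spectral_triple a b p q u v g f lam -> 0 < lam.
Proof.
move=> st; have [iphi ipsi] := spectral_triple_integrable st.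
case: st => fLp norm1 gE fE; have p_gt0 : 0 < p by apply: lt_trans p_gt1.
set I := Rintegral mu `[a, b] (fun x => `|f x| `^ p).
set J := Rintegral mu `[a, b]
  (fun x => f x * u x * Rintegral mu `[x, b] (fun y => v y * spow q (g y))).
have I_gt0 : 0 < I.
  rewrite lt_neqAle Rintegral_ge0 ?andbT => [|x _]; last exact: powR_ge0.
  apply/eqP => I0; move: norm1; rewrite /pnorm -/I -I0 powR0 ?invr_eq0 ?gt_eqF //.
  by move/eqP; rewrite eq_sym oner_eq0.
have normE x : a <= x <= b -> `|f x| `^ p =
    lam * (f x * u x * Rintegral mu `[x, b] (fun y => v y * spow q (g y))).
  by move=> x_ab; rewrite -mul_spow_self // fE // /Tstar; ring.
have lam_neq0 : lam != 0.
  apply: contraTneq I_gt0 => lam0; rewrite /I (@eq_Rintegral _ _ _ mu _ (fun=> 0)).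
    by rewrite Rintegral_cst // mul0r ltxx.
  by move=> x /[!inE] /= /[!in_itv] /= /normE ->; rewrite lam0 mul0r.
have JE : J = lam^-1 * I.
  rewrite /I -RintegralZl //; last exact: in_Lp_integrable.
  apply: eq_Rintegral => x /[!inE] /= /[!in_itv] /= /normE ->.
  by rewrite mulrA mulVf // mul1r.
have J_ge0 : 0 <= J.
  rewrite /J (Rintegral_triangle_swap iphi ipsi).
  apply: Rintegral_ge0 => y /= /[!in_itv] /= y_ab.
  rewrite mulrAC -[v y * _]/(Top a u v f y) -gE // mul_spow_self ?powR_ge0 //.
  by apply: lt_trans q_gt1.
move: J_ge0; rewrite JE pmulr_lge0 // invr_ge0 le_eqVlt => /predU1P[lam0|//].
by move: lam_neq0; rewrite lam0 eqxx.
Qed.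

End SpectralTriple.

Theorem mainTheorem2 (R : realType) (a b p q : R) (u v : R -> R)
  (g1 f1 g2 f2 : R -> R) (lam1 lam2 : R) :
  a < b -> 1 < p -> 1 < q ->
  (forall x, a <= x <= b -> 0 < u x) ->
  (forall x, a <= x <= b -> 0 < v x) ->
  in_Lp a b ((1 - p^-1)^-1) u ->
  in_Lp a b q v ->
  spectral_triple a b p q u v g1 f1 lam1 ->
  spectral_triple a b p q u v g2 f2 lam2 ->
  forall eps : R, 0 < eps ->
    (P a b (fun x => (Top a u v f1 x - eps * Top a u v f2 x)%R)
     <= P a b (fun x => (Top a u v f1 x
                 - (eps `^ ((p - 1) / (q - 1)) * (lam2 / lam1) `^ ((q - 1)^-1))
                   * Top a u v f2 x)%R))%E.
Proof.
move=> ab p_gt1 q_gt1 u_pos v_pos hu hv st1 st2 eps eps_gt0.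
have inner x : a < x < b -> a <= x <= b by move=> /andP[ax xb]; rewrite !ltW.
have u_gt0 x (x_ab : a < x < b) := u_pos x (inner x x_ab).
have v_gt0 x (x_ab : a < x < b) := v_pos x (inner x x_ab).
have lam1_gt0 := spectral_triple_gt0 ab p_gt1 q_gt1 hu hv st1.
have lam2_gt0 := spectral_triple_gt0 ab p_gt1 q_gt1 hu hv st2.
have [iphi1 ipsi1] := spectral_triple_integrable ab p_gt1 q_gt1 hu hv st1.
have [iphi2 ipsi2] := spectral_triple_integrable ab p_gt1 q_gt1 hu hv st2.
case: st1 st2 => [_ _ g1E f1E] [_ _ g2E f2E].
set c := _ * _ `^ (q - 1)^-1; set del := eps `^ (p - 1) * (lam2 / lam1).
have c_gt0 : 0 < c by rewrite mulr_gt0 ?powR_gt0 ?divr_gt0.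
have cE : c `^ (q - 1) = del.
  by rewrite powR_rescale ?powR_ge0 ?divr_ge0 ?ltW // subr_eq0 gt_eqF.
apply: P_le => n sc_T.
apply: (has_sign_changes_eq (h1 := fun x => g1 x - _ * g2 x)) => [x /inner x_ab|].
  by rewrite g1E ?g2E.
apply: (has_sign_changes_sg (h1 := fun x => spow q (g1 x) - del * spow q (g2 x))).
  by move=> x _; rewrite (sg_subr_spowZ _ _ q_gt1 c_gt0) cE.
apply: (Tstar_sign_changes ab u_gt0 v_gt0 ipsi1 ipsi2).
apply: (has_sign_changes_pmull (k := fun=> lam1)
  (h1 := fun x => spow p (f1 x) - eps `^ (p - 1) * spow p (f2 x))) => // [x /inner x_ab|].
  by rewrite f1E ?f2E // /del; field; rewrite gt_eqF.
apply: (has_sign_changes_sg (h1 := fun x => f1 x - eps * f2 x)).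
  by move=> x _; apply: sg_subr_spowZ.
exact: (Top_sign_changes (c := eps) ab u_gt0 v_gt0 iphi1 iphi2 sc_T).
Qed.
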